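(* Let $K$ be a field of characteristic $0$, let $E$ be the infinite-dimensional unitary Grassmann algebra over $K$ with even part $E_0$, let $A=\begin{pmatrix} E_0 & E\\ 0 & E\end{pmatrix}$, and let $F_n(A)=K\langle x_1,\dots,x_n\rangle/(K\langle x_1,\dots,x_n\rangle\cap T(A))$. If $n\geq 2$ and $m\geq 2$, then the polynomial \[f_m^{(1)}=[x_2,x_1,\dots,x_1]\] (a left-normed commutator of length $m$ with $x_2$ followed by $m-1$ copies of $x_1$) is not a polynomial identity of $F_n(A)$.
   Context: All algebras are associative and unitary over $K$; $T(A)$ is the ideal of polynomial identities of $A$. $E$ is generated by anticommuting $e_1,e_2,\dots$ and $E_0$ is the span of basis products of even length. Commutators: $[a,b]=ab-ba$, $[a_1,\dots,a_k]=[[a_1,\dots,a_{k-1}],a_k]$. *)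

From HB Require Import structures.
From mathcomp Require Import all_boot all_order all_algebra.
From mathcomp Require Import finmap.
Set Implicit Arguments.
Unset Strict Implicit.
Unset Printing Implicit Defensive.
Import Order.TTheory GRing.Theory Num.Theory.
Local Open Scope ring_scope.
Local Open Scope fset_scope.

Section Defs.
Variable K : fieldType.

(* Noncommutative polynomials K<x_0,...,x_{n-1}> as expressions.       *)
(* (x_1,...,x_n of the paper are tVar 0, ..., tVar (n-1).)             *)
Inductive term (n : nat) : Type :=
| tVar of 'I_n
| tCst of K
| tAdd of term n & term n
| tMul of term n & term n.

Definition tComm n (a b : term n) : term n :=
  tAdd (tMul a b) (tMul (tCst n (-1)) (tMul b a)).

Fixpoint substT n k (g : 'I_n -> term k) (t : term n) : term k :=
  match t with
  | tVar i => g i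
  | tCst c => tCst k c
  | tAdd s u => tAdd (substT g s) (substT g u)
  | tMul s u => tMul (substT g s) (substT g u)
  end.

(* The infinite-dimensional unitary Grassmann algebra E over K.       *)
(* Basis: e_S = e_{s_1} ... e_{s_k} (s_1 < ... < s_k), S a finite set *)
(* of indices (S = empty gives 1).  An element is represented by a     *)
(* finite list of (coefficient, basis set) pairs; its actual value is  *)
(* its coefficient function coefE, so two lists represent the same     *)
(* element of E iff they have the same coefficient function.           *)
Definition Erep := seq (K * {fset nat}).

Definition coefE (a : Erep) (U : {fset nat}) : K :=
  \sum_(p <- a | p.2 == U) p.1.

Definition eqE (a b : Erep) : Prop := forall U, coefE a U = coefE b U.

(* e_S e_T = (-1)^{#{(s,t) in S x T | t < s}} e_{S u T} if S, T disjoint, 0 otherwise *)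
Definition signE (S T : {fset nat}) : K :=
  (-1) ^+ (\sum_(s <- enum_fset S) \sum_(t <- enum_fset T) (t < s)%N)%N.

Definition addE (a b : Erep) : Erep := a ++ b.
Definition cstE (c : K) : Erep := [:: (c, fset0)].
Definition genE (i : nat) : Erep := [:: (1, [fset i])].
Definition mulE (a b : Erep) : Erep :=
  [seq (((p.2 `&` q.2 == fset0) %:R) * signE p.2 q.2 * p.1 * q.1, p.2 `|` q.2)
  | p <- a, q <- b].

Definition inE0 (a : Erep) : Prop := forall U, odd #|` U| -> coefE a U = 0.

(* A = [[E_0, E], [0, E]] : (a, b, c) stands for the matrix            *)
(*   ( a  b )                                                          *)
(*   ( 0  c )   with a in E_0, b, c in E.                              *)
Definition Arep := (Erep * Erep * Erep)%type.

Definition inA (x : Arep) : Prop := inE0 x.1.1.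

Definition addA (x y : Arep) : Arep :=
  (addE x.1.1 y.1.1, addE x.1.2 y.1.2, addE x.2 y.2).
Definition mulA (x y : Arep) : Arep :=
  (mulE x.1.1 y.1.1, addE (mulE x.1.1 y.1.2) (mulE x.1.2 y.2), mulE x.2 y.2).
Definition cstA (c : K) : Arep := (cstE c, [::], cstE c).

Definition zeroA (x : Arep) : Prop :=
  eqE x.1.1 [::] /\ eqE x.1.2 [::] /\ eqE x.2 [::].

Fixpoint evalA n (v : 'I_n -> Arep) (t : term n) : Arep :=
  match t with
  | tVar i => v i
  | tCst c => cstA c
  | tAdd s u => addA (evalA v s) (evalA v u)
  | tMul s u => mulA (evalA v s) (evalA v u)
  end.

Definition PI_A k (f : term k) : Prop :=
  forall v : 'I_k -> Arep, (forall i, inA (v i)) -> zeroA (evalA v f).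

(* F_n(A) = K<x_1..x_n> / (K<x_1..x_n> \cap T(A)).  Its elements are   *)
(* classes of g in K<x_1..x_n>, and the class of g is zero iff g is in  *)
(* T(A).  Since the quotient map is an algebra morphism,                *)
(* f(class g_1, ..., class g_k) = class (f(g_1,...,g_k)); hence f is a  *)
(* polynomial identity of F_n(A) iff f(g_1,...,g_k) \in T(A) for all    *)
(* g_1, ..., g_k in K<x_1..x_n>.                                        *)
Definition PI_Fn (n k : nat) (f : term k) : Prop :=
  forall g : 'I_k -> term n, PI_A (substT g f).

Definition x1 : term 2 := tVar (@Ordinal 2 0 isT).
Definition x2 : term 2 := tVar (@Ordinal 2 1 isT).

Definition f1 (m : nat) : term 2 := iter m.-1 (fun u => tComm u x1) x2.

End Defs.

From Pilot Require Import Defs.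
From HB Require Import structures.
From mathcomp Require Import all_boot all_order all_algebra.
From mathcomp Require Import finmap.
Set Implicit Arguments.
Unset Strict Implicit.
Unset Printing Implicit Defensive.
Import GRing.Theory.
Local Open Scope fset_scope.
Local Open Scope ring_scope.

(** The upper triangular matrices over [K] sit inside [A] as the triples
    whose three Grassmann entries are scalars.  Evaluating at [x_1 := e_11]
    and [x_2 := e_12], and using [e_12 e_11 = 0] and [e_11 e_12 = e_12], gives
    [[e_12, e_11, ..., e_11] = ±e_12 <> 0].  So [f_m^(1)] is not an identity
    of [A], hence not of [F_n(A)]: substitute the generators [x_1, x_2]. *)

Section IteratedCommutator.
Variable R : pzRingType.

Lemma iter_commr_sign (x y : R) k : y * x = 0 -> x * y = y ->
  iter k (fun u => u * x - x * u) y = (-1) ^+ k * y.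
Proof.
move=> yx0 xyy; elim: k => [|k IHk]; first by rewrite mul1r.
rewrite iterS IHk -mulrA yx0 mulr0 mulrA (commr_sign x k) -mulrA xyy.
by rewrite sub0r exprS mulN1r mulNr.
Qed.

End IteratedCommutator.

Section ScalarGrassmann.
Variable K : fieldType.
Implicit Types a b : Erep K.

Definition scalarE a := all (fun p => p.2 == fset0) a.
Definition scalE a := \sum_(p <- a) p.1.

Lemma coefE_scalar a U :
  scalarE a -> Defs.coefE a U = if U == fset0 then scalE a else 0.
Proof.
move=> /allP a0; rewrite /Defs.coefE /scalE; case: eqP => [-> | /eqP U0].
  rewrite big_seq_cond [RHS]big_seq; apply: eq_bigl => p.
  by case: (boolP (p \in a)) => // /a0 ->.
rewrite big1_seq // => p /andP[/eqP pU /a0].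
by rewrite pU (negbTE U0).
Qed.

Lemma inE0_scalar a : scalarE a -> inE0 a.
Proof.
move=> a0 U oddU; rewrite coefE_scalar //; case: eqP oddU => // ->.
by rewrite cardfs0.
Qed.

Lemma scalarE_add a b : scalarE (addE a b) = scalarE a && scalarE b.
Proof. exact: all_cat. Qed.

Lemma scalE_add a b : scalE (addE a b) = scalE a + scalE b.
Proof. exact: big_cat. Qed.

Lemma mulE_scalar a b : scalarE a -> scalarE b ->
  mulE a b = [seq (p.1 * q.1, fset0) | p <- a, q <- b].
Proof.
move=> /allP a0 /allP b0; rewrite /mulE; congr flatten.
apply/eq_in_map => p /a0/eqP p0; apply/eq_in_map => q /b0/eqP q0.
by rewrite p0 q0 fsetIid fsetUid (eqxx (fset0 : {fset nat})) /signE big_seq_fset0 !mul1r.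
Qed.

Lemma scalarE_mul a b : scalarE a -> scalarE b -> scalarE (mulE a b).
Proof.
by move=> a0 b0; rewrite mulE_scalar //; apply/allP => _ /allpairsP[[p q] [_ _ ->]].
Qed.

Lemma scalE_mul a b : scalarE a -> scalarE b -> scalE (mulE a b) = scalE a * scalE b.
Proof.
move=> a0 b0; rewrite mulE_scalar // /scalE big_allpairs_dep mulr_suml.
by apply: eq_bigr => p _; rewrite mulr_sumr.
Qed.

Lemma scalE_cst c : scalE (cstE c) = c.
Proof. exact: big_seq1. Qed.

End ScalarGrassmann.

Section UpperTriangular.
Variable K : fieldType.

Definition reprA (x : Arep K) (M : 'M[K]_2) : Prop :=
  [/\ [/\ scalarE x.1.1, scalarE x.1.2 & scalarE x.2],
      [/\ scalE x.1.1 = M 0 0, scalE x.1.2 = M 0 1 & scalE x.2 = M 1 1]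
    & M 1 0 = 0].

Lemma reprA_add x y M N : reprA x M -> reprA y N -> reprA (Defs.addA x y) (M + N).
Proof.
move=> [[x11 x12 x2] [eM00 eM01 eM11] M10] [[y11 y12 y2] [eN00 eN01 eN11] N10].
split; first by rewrite !scalarE_add x11 x12 x2 y11 y12 y2.
  by split; rewrite /= scalE_add !mxE ?eM00 ?eM01 ?eM11 ?eN00 ?eN01 ?eN11.
by rewrite mxE M10 N10 addr0.
Qed.

Lemma mulmx2E (M N : 'M[K]_2) i j : (M * N) i j = M i 0 * N 0 j + M i 1 * N 1 j.
Proof.
rewrite -mulmxE mxE !big_ord_recl big_ord0 addr0.
by rewrite (_ : lift 0 0 = 1) //; apply: val_inj.
Qed.

Lemma reprA_mul x y M N : reprA x M -> reprA y N -> reprA (Defs.mulA x y) (M * N).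
Proof.
move=> [[x11 x12 x2] [eM00 eM01 eM11] M10] [[y11 y12 y2] [eN00 eN01 eN11] N10].
split; first by rewrite /= scalarE_add !scalarE_mul.
  split; rewrite /= ?scalE_add !scalE_mul // !mulmx2E ?M10 ?N10.
  - by rewrite mulr0 addr0 eM00 eN00.
  - by rewrite eM00 eN01 eM01 eN11.
  - by rewrite mul0r add0r eM11 eN11.
by rewrite mulmx2E M10 N10 mul0r mulr0 addr0.
Qed.

Lemma reprA_cst c : reprA (cstA c) c%:M.
Proof.
split; first by split.
  by split; rewrite ?scalE_cst /scalE ?big_nil mxE.
by rewrite mxE.
Qed.

Definition mxA (M : 'M[K]_2) : Arep K := (cstE (M 0 0), cstE (M 0 1), cstE (M 1 1)).

Lemma reprA_mxA (M : 'M[K]_2) : M 1 0 = 0 -> reprA (mxA M) M.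
Proof. by move=> M10; split=> //; split; rewrite ?scalE_cst. Qed.

Lemma inA_reprA x M : reprA x M -> inA x.
Proof. by case=> [[x11 _ _] _ _]; apply: inE0_scalar. Qed.

Fixpoint evalM n (V : 'I_n -> 'M[K]_2) (t : term K n) : 'M[K]_2 :=
  match t with
  | tVar i => V i
  | tCst c => c%:M
  | tAdd s u => evalM V s + evalM V u
  | tMul s u => evalM V s * evalM V u
  end.

Lemma reprA_evalA n (v : 'I_n -> Arep K) V t :
  (forall i, reprA (v i) (V i)) -> reprA (evalA v t) (evalM V t).
Proof.
move=> vV; elim: t => /= [i | c | s IHs u IHu | s IHs u IHu].
- exact: vV.
- exact: reprA_cst.
- exact: reprA_add.
- exact: reprA_mul.
Qed.

Lemma evalM_iter_comm n V (s t : term K n) k :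
  evalM V (iter k (fun u => tComm u s) t)
  = iter k (fun u => u * evalM V s - evalM V s * u) (evalM V t).
Proof. by elim: k => //= k ->; rewrite rmorphN1 mulN1r. Qed.

End UpperTriangular.

Lemma evalA_substT (K : fieldType) n k (v : 'I_k -> Arep K) (g : 'I_n -> term K k) t :
  evalA v (substT g t) = evalA (fun i => evalA v (g i)) t.
Proof. by elim: t => //= s -> u ->. Qed.

Lemma f1_delta_mx_entry (K : fieldType) m :
  evalM (fun j : 'I_2 => delta_mx 0 j : 'M[K]_2) (f1 K m) 0 1 = (-1) ^+ m.-1.
Proof.
rewrite evalM_iter_comm /= iter_commr_sign; last first.
- by rewrite -mulmxE mul_delta_mx.
- by rewrite -mulmxE mul_delta_mx_0.
have -> : (-1) ^+ m.-1 = ((-1) ^+ m.-1)%:M :> 'M[K]_2 by rewrite rmorphXn rmorphN1.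
by rewrite -mulmxE mul_scalar_mx !mxE /= mulr1.
Qed.

Theorem lemma3p5 (K : fieldType) (charK0 : [pchar K]%R =i pred0)
  (n m : nat) (hn : (2 <= n)%N) (hm : (2 <= m)%N) :
  ~ @PI_Fn K n 2 (f1 K m).
Proof.
pose g (j : 'I_2) : term K n := @tVar K n (widen_ord hn j).
pose v (i : 'I_n) := mxA (delta_mx 0 (inord i) : 'M[K]_2).
have reprV i : reprA (v i) (delta_mx 0 (inord i)) by apply: reprA_mxA; rewrite mxE.
have reprW : reprA (evalA v (substT g (f1 K m)))
                   (evalM (fun j => delta_mx 0 j) (f1 K m)).
  rewrite evalA_substT; apply: reprA_evalA => j.
  by have := reprV (widen_ord hn j); rewrite (inord_val j).
move=> /(_ g v (fun i => inA_reprA (reprV i))) [_ [/(_ fset0) + _]].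
case: reprW => [[_ w12 _] [_ e12 _] _]; rewrite coefE_scalar // eqxx e12 f1_delta_mx_entry.
by rewrite /Defs.coefE big_nil => /eqP; rewrite signr_eq0.
Qed.
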